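(* Let $I=\langle N,M,V\rangle$ be an ordered instance of chores and let $i\in N$ be an agent with an MMS partition $A=\langle A_1,\dots,A_n\rangle$ containing a bundle $B$ with $|B|=2$ and $B\cap\{1,2,\dots,n-1\}=\emptyset$. Then $i$ has an MMS partition $A'=\langle A'_1,\dots,A'_n\rangle$ such that (i) $|A_j|=|A'_j|$ for all $j\in N$, (ii) $\{n,n+1\}$ is one of the bundles of $A'$, and (iii) each chore $g\in\{1,2,\dots,n-1\}$ lies in the bundle with the same index in $A$ and in $A'$.
   Context: An instance of chores $I=\langle N,M,V\rangle$ has agents $N=\{1,\dots,n\}$, chores $M=\{1,\dots,m\}$ and additive valuations $v_i$ with $v_i(\emptyset)=0$, $v_i(S)=\sum_{g\in S}v_i(\{g\})$ and $v_{ij}:=v_i(\{j\})\le 0$. It is ordered if $v_{ij}\le v_{i(j+1)}$ for all $i\in N$ and $1\le j<m$ (so chore $1$ is the worst). An allocation ($n$-partition) is an ordered $n$-tuple of pairwise disjoint, possibly empty subsets of $M$ with union $M$. The maximin share of $i$ is $\mu_i=\max_A\min_j v_i(A_j)$ over all allocations; an MMS partition of $i$ is an allocation $A$ with $v_i(A_j)\ge\mu_i$ for all $j$. *)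

From HB Require Import structures.
From mathcomp Require Import all_boot all_order all_algebra.
Set Implicit Arguments. Unset Strict Implicit. Unset Printing Implicit Defensive.
Import Order.TTheory GRing.Theory Num.Theory.
Local Open Scope ring_scope.

(* Agents N = {1..n} are represented by 'I_n; chores M = {1..m} by 'I_m,
   where the ordinal g stands for chore number g+1 (see [chore_num]). *)

Definition chore_num (m : nat) (g : 'I_m) : nat := (val g).+1.

Definition bval (R : numDomainType) (n m : nat) (v : 'I_n -> 'I_m -> R)
  (i : 'I_n) (S : {set 'I_m}) : R := \sum_(g in S) v i g.

Definition chores_instance (R : numDomainType) (n m : nat)
  (v : 'I_n -> 'I_m -> R) : Prop := forall i g, v i g <= 0.

Definition ordered_instance (R : numDomainType) (n m : nat)
  (v : 'I_n -> 'I_m -> R) : Prop :=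
  forall (i : 'I_n) (j : 'I_m) (h : ((val j).+1 < m)%N), v i j <= v i (Ordinal h).

Definition is_allocation (n m : nat) (A : 'I_n -> {set 'I_m}) : Prop :=
  (forall j k : 'I_n, j != k -> [disjoint A j & A k]) /\
  (forall g : 'I_m, exists j : 'I_n, g \in A j).

(* mu is the maximin share of agent i:
   mu = max over allocations A of min_j v_i(A_j) *)
Definition is_mms (R : numDomainType) (n m : nat) (v : 'I_n -> 'I_m -> R)
  (i : 'I_n) (mu : R) : Prop :=
  (exists A : 'I_n -> {set 'I_m}, is_allocation A /\ forall j, mu <= bval v i (A j)) /\
  (forall A : 'I_n -> {set 'I_m}, is_allocation A -> exists j, bval v i (A j) <= mu).

Definition mms_partition (R : numDomainType) (n m : nat)
  (v : 'I_n -> 'I_m -> R) (i : 'I_n) (A : 'I_n -> {set 'I_m}) : Prop :=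
  is_allocation A /\
  exists mu, is_mms v i mu /\ forall j, mu <= bval v i (A j).

From HB Require Import structures.
From mathcomp Require Import all_boot all_order fingroup perm all_algebra zify.
Import Order.TTheory GRing.Theory Num.Theory.
Local Open Scope ring_scope.

(* Let the two-chore bundle be {x, y} with x < y; both are among the chores
   n, n+1, ... Relabel every chore by the permutation sending x to n and y to
   n+1.  All other chores move to later, hence no worse, chores, so the other
   bundles keep at least their value, and chores 1, ..., n-1 are not moved.
   The new bundle {n, n+1} is worth at least any bundle containing two of the
   n+1 worst chores, and by pigeonhole some bundle of the MMS partition does,
   so it is worth at least the maximin share. *)

Lemma mms_partition_of_ge {R : numDomainType} {n m : nat}
    {v : 'I_n -> 'I_m -> R} {i : 'I_n} {A A' : 'I_n -> {set 'I_m}} :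
  mms_partition v i A -> is_allocation A' ->
  (forall j, exists k, bval v i (A k) <= bval v i (A' j)) ->
  mms_partition v i A'.
Proof.
move=> [_ [mu [mms_mu le_mu]]] allocA' dominated; split=> //.
exists mu; split=> // j; have [k le_k] := dominated j.
exact: le_trans (le_mu k) le_k.
Qed.

Lemma bval_pair {R : numDomainType} {n m : nat} (v : 'I_n -> 'I_m -> R) i
    (g h : 'I_m) :
  g != h -> bval v i [set g; h] = v i g + v i h.
Proof. by move=> neq_gh; rewrite /bval big_setU1 ?big_set1 ?inE. Qed.

Lemma allocation_pigeonhole {n m : nat} {A : 'I_n -> {set 'I_m}} :
  is_allocation A -> (n < m)%N ->
  exists j (g h : 'I_m),
    [/\ g != h, (g <= n)%N, (h <= n)%N, g \in A j & h \in A j].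
Proof.
move=> [_ coverA] lt_nm; have [owner ownerP] := fin_all_exists coverA.
pose low (k : 'I_n.+1) : 'I_m := widen_ord lt_nm k.
have /injectivePn [k [l neq_kl same_owner]] : ~~ injectiveb (owner \o low).
  by apply/injectiveP => /leq_card; rewrite !card_ord ltnn.
exists (owner (low k)), (low k), (low l); split.
- by apply: contra neq_kl => /eqP [] /val_inj ->.
- by rewrite -ltnS /= ltn_ord.
- by rewrite -ltnS /= ltn_ord.
- exact: ownerP.
- by rewrite [owner (low k)]same_owner; apply: ownerP.
Qed.

Section Relabelling.

Context {n m : nat} (pi : {perm 'I_m}).

Lemma relabel_allocation {A : 'I_n -> {set 'I_m}} :
  is_allocation A -> is_allocation (fun j => pi @: A j).
Proof.
move=> [disjA coverA]; split=> [j k /disjA | g].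
  by rewrite imset_disjoint //; apply: perm_inj.
have [j Ag] := coverA (pi^-1 g)%g.
by exists j; rewrite -[g](permKV pi) imset_f.
Qed.

Lemma card_relabel (S : {set 'I_m}) : #|pi @: S| = #|S|.
Proof. exact/card_imset/perm_inj. Qed.

Lemma mem_relabel (S : {set 'I_m}) g : (pi g \in pi @: S) = (g \in S).
Proof. exact/mem_imset/perm_inj. Qed.

Lemma bval_relabel {R : numDomainType} (v : 'I_n -> 'I_m -> R) i (S : {set 'I_m}) :
  bval v i (pi @: S) = \sum_(g in S) v i (pi g).
Proof. by rewrite /bval big_imset //; apply: in2W; apply: perm_inj. Qed.

End Relabelling.

Section OrderedChores.

Context {R : realDomainType} {n m : nat} {v : 'I_n -> 'I_m -> R}.
Hypotheses (chores : chores_instance v) (ordered : ordered_instance v).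

Lemma ordered_le i (g h : 'I_m) : (g <= h)%N -> v i g <= v i h.
Proof.
pose f k := if insub k is Some g then v i g else 0.
have fE (g' : 'I_m) : f g' = v i g' by rewrite /f valK.
have f_mono : {in [pred k | k < m]%N &, {homo f : a b / (a <= b)%N >-> a <= b}}.
  apply: homo_leq_in => [a | a b c | a b _ /= lt_bm c /andP [_ /ltn_trans] |].
  - exact: lexx.
  - exact: le_trans.
  - exact.
  - move=> k lt_km lt_k1m; have := ordered i (Ordinal lt_km) lt_k1m.
    by rewrite -(fE (Ordinal lt_km)) -(fE (Ordinal lt_k1m)).
move=> le_gh; rewrite -fE -fE.
exact: f_mono (ltn_ord g) (ltn_ord h) le_gh.
Qed.

Lemma bval_le_pair i {S : {set 'I_m}} {g h : 'I_m} :
  g != h -> g \in S -> h \in S -> bval v i S <= v i g + v i h.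
Proof.
move=> neq_gh Sg Sh; rewrite /bval (bigD1 g) //= (bigD1 h) /=; last first.
  by rewrite Sh eq_sym.
by rewrite addrA gerDl; apply: sumr_le0 => k _; apply: chores.
Qed.

Lemma bval_relabel_ge (pi : {perm 'I_m}) i (S : {set 'I_m}) :
  (forall g, g \in S -> (g <= pi g)%N) -> bval v i S <= bval v i (pi @: S).
Proof.
move=> up; rewrite bval_relabel /bval; apply: ler_sum => g Sg.
exact/ordered_le/up.
Qed.

Lemma exists_bundle_le_pair_at_n {A : 'I_n -> {set 'I_m}} i (s t : 'I_m) :
  is_allocation A -> s = n.-1 :> nat -> t = n :> nat ->
  exists j, bval v i (A j) <= v i s + v i t.
Proof.
move=> allocA s_val t_val; have lt_nm : (n < m)%N by rewrite -t_val ltn_ord.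
have [j [g [h [neq_gh le_gn le_hn Ag Ah]]]] := allocation_pigeonhole allocA lt_nm.
exists j; apply: le_trans (bval_le_pair i neq_gh Ag Ah) _.
wlog lt_gh : g h neq_gh le_gn le_hn Ag Ah / (g < h)%N.
  move=> le_pair; case: (ltngtP g h) => [lt_gh | lt_hg | /val_inj eq_gh].
  - exact: le_pair.
  - by rewrite addrC; apply: le_pair; rewrite // eq_sym.
  - by rewrite eq_gh eqxx in neq_gh.
by apply: lerD; apply: ordered_le; lia.
Qed.

End OrderedChores.

Section SwapPair.

Context {m : nat} (x y s t : 'I_m).
Hypotheses (lt_st : (s < t)%N) (le_sx : (s <= x)%N) (lt_xy : (x < y)%N)
  (le_ty : (t <= y)%N).

Definition swap_pair : {perm 'I_m} := (tperm x s * tperm y t)%g.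

Lemma swap_pair_x : swap_pair x = s.
Proof. by rewrite permM tpermL tpermD //; apply/eqP => e; subst; lia. Qed.

Lemma swap_pair_y : swap_pair y = t.
Proof.
by rewrite permM (tpermD (x := x)) ?tpermL //; apply/eqP => e; subst; lia.
Qed.

Lemma swap_pair_ge (g : 'I_m) : g != x -> g != y -> (g <= swap_pair g)%N.
Proof.
move=> gx gy; rewrite permM.
by case: (tpermP x s g) => [e|e|_ _]; case: tpermP => [e'|e'|_ _]; subst;
  rewrite ?eqxx // in gx gy *; lia.
Qed.

Lemma swap_pair_fix (g : 'I_m) : (g < s)%N -> swap_pair g = g.
Proof. by move=> lt_gs; rewrite permM !tpermD //; apply/eqP => e; subst; lia. Qed.

End SwapPair.

Theorem lemma15 (R : realDomainType) (n m : nat) (v : 'I_n -> 'I_m -> R)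
  (Hch : chores_instance v) (Hord : ordered_instance v)
  (i : 'I_n) (A : 'I_n -> {set 'I_m}) (HA : mms_partition v i A)
  (b : 'I_n) (Hb2 : #|A b| = 2%N)
  (Hblow : forall g : 'I_m, g \in A b -> (n <= chore_num g)%N) :
  exists A' : 'I_n -> {set 'I_m},
    [/\ mms_partition v i A',
        (forall j : 'I_n, #|A j| = #|A' j|),
        (exists k : 'I_n,
            A' k = [set g : 'I_m | (chore_num g == n) || (chore_num g == n.+1)])
      & (forall g : 'I_m, (chore_num g <= n.-1)%N ->
            forall j : 'I_n, (g \in A j) = (g \in A' j))].
Proof.
have allocA := HA.1.
have [x [y [lt_xy Ab]]] : exists x y : 'I_m, (x < y)%N /\ A b = [set x; y].
  have /cards2P [x [y [neq_xy ->]]] : #|A b| == 2%N by rewrite Hb2.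
  case: (ltngtP x y) => [lt_xy | lt_yx | /val_inj eq_xy].
  - by exists x, y.
  - by exists y, x; rewrite setUC.
  - by rewrite eq_xy eqxx in neq_xy.
have le_nx : (n <= x.+1)%N by apply: Hblow; rewrite Ab set21.
have le_ny : (n <= y.+1)%N by apply: Hblow; rewrite Ab set22.
have n_gt0 : (0 < n)%N by have := ltn_ord b; lia.
have lt_nm : (n < m)%N by have := ltn_ord y; lia.
pose s : 'I_m := Ordinal (leq_ltn_trans (leq_pred n) lt_nm).
pose t : 'I_m := Ordinal lt_nm.
have [lt_st le_sx le_ty] : [/\ (s < t)%N, (s <= x)%N & (t <= y)%N].
  by split=> /=; lia.
pose pi := swap_pair x y s t.
have pi_Ab : pi @: A b = [set s; t].
  by rewrite Ab imsetU1 imset_set1 swap_pair_x ?swap_pair_y.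
exists (fun j => pi @: A j); split.
- apply: (mms_partition_of_ge HA (relabel_allocation pi allocA)) => j.
  have [-> | neq_jb] := eqVneq j b.
    have [k le_k] := exists_bundle_le_pair_at_n Hch Hord i s t allocA erefl erefl.
    by exists k; rewrite pi_Ab bval_pair // -val_eqE ltn_eqF.
  exists j; apply: (bval_relabel_ge Hord) => g Ajg.
  have Abg : g \notin A b by rewrite (disjointFr (allocA.1 j b neq_jb) Ajg).
  by apply: swap_pair_ge => //; apply: contraNneq Abg => ->; rewrite Ab !inE eqxx ?orbT.
- by move=> j; rewrite card_relabel.
- exists b; rewrite pi_Ab; apply/setP => g; rewrite !inE /chore_num -!val_eqE /=; lia.
- move=> g le_gn j; have lt_gs : (g < s)%N by rewrite /chore_num /= in le_gn *; lia.
  by rewrite -[in RHS](swap_pair_fix x y s t lt_st le_sx lt_xy le_ty g lt_gs) mem_relabel.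
Qed.
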